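(* Let $F:X\rightrightarrows Y$ be a set-valued map with nonempty values, $\varphi:X\to\mathbb R$ a function, $\bar x\in X$, $e\in K\setminus\{0\}$, and $f=\varphi(\cdot)e$. If $\widehat\partial\varphi(\bar x)\neq\emptyset$, then $$\widehat\partial(F-f)(\bar x)\subset\bigcap_{t\in\widehat\partial f(\bar x),\ y^*\in K_e^+}\Big(\widehat\partial F(\bar x)-y^*(e)^{-1}(y^*\circ t)e\Big),$$ where $(F-f)(x)=\{y-\varphi(x)e: y\in F(x)\}$ and $y^*(e)^{-1}(y^*\circ t)e$ denotes the operator $x\mapsto y^*(e)^{-1}y^*(t(x))\,e$.
   Context: $X,Y$ are real normed spaces with duals $X^*,Y^*$; $B(X,Y)$ is the space of bounded linear operators $X\to Y$; $B(x,\delta)$ is the open ball and $D_Y$ the closed unit ball. $K\subset Y$ is a pointed closed convex cone, $K^+=\{y^*\in Y^*: y^*(k)\ge0\ \forall k\in K\}$ and $K_e^+=\{y^*\in K^+: y^*(e)\ne0\}$. For $G:X\rightrightarrows Y$ (or a function $G:X\to Y$, via $x\mapsto\{G(x)\}$), $\widehat\partial G(\bar x)$ is the set of all $T\in B(X,Y)$ such that for every $\varepsilon>0$ there is $\delta>0$ with $G(x)+K\subset G(\bar x)+K+T(x-\bar x)+\varepsilon\|x-\bar x\|D_Y$ for all $x\in B(\bar x,\delta)$. $\widehat\partial\varphi(\bar x)$ is the usual Fréchet subdifferential of the real function $\varphi$. *)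

From HB Require Import structures.
From mathcomp Require Import all_boot all_order all_algebra.
From mathcomp Require Import all_classical all_reals all_analysis.
Set Implicit Arguments. Unset Strict Implicit. Unset Printing Implicit Defensive.
Import Order.TTheory GRing.Theory Num.Theory.
Import numFieldNormedType.Exports.
Local Open Scope classical_set_scope.
Local Open Scope ring_scope.

Section Defs.
Variable R : realType.

Definition bounded_linear (X Y : normedModType R) (T : X -> Y) : Prop :=
  (forall (a : R) (u v : X), T (a *: u + v) = a *: T u + T v) /\
  (exists M : R, forall u : X, `|T u| <= M * `|u|).

Definition dual_elt (Y : normedModType R) (ys : Y -> R) : Prop :=
  (forall (a : R) (u v : Y), ys (a *: u + v) = a * ys u + ys v) /\
  (exists M : R, forall u : Y, `|ys u| <= M * `|u|).

Definition pointed_closed_convex_cone (Y : normedModType R) (K : set Y) : Prop :=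
  K 0 /\
  (forall (l : R) (u : Y), 0 <= l -> K u -> K (l *: u)) /\
  (forall (l : R) (u v : Y), 0 <= l <= 1 -> K u -> K v ->
      K (l *: u + (1 - l) *: v)) /\
  closed K /\
  (forall u : Y, K u -> K (- u) -> u = 0).

Definition Kplus (Y : normedModType R) (K : set Y) : set (Y -> R) :=
  [set ys | dual_elt ys /\ forall k, K k -> 0 <= ys k].

Definition Keplus (Y : normedModType R) (K : set Y) (e : Y) : set (Y -> R) :=
  [set ys | Kplus K ys /\ ys e != 0].

(* Frechet subdifferential (w.r.t. the cone K) of a set-valued map G at xb:
   T in B(X,Y) such that for every eps > 0 there is delta > 0 with
   G(x) + K \subset G(xb) + K + T(x - xb) + eps ||x - xb|| D_Y
   for all x in B(xb, delta). *)
Definition frechet_subdiff_sv (X Y : normedModType R) (K : set Y)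
    (G : X -> set Y) (xb : X) : set (X -> Y) :=
  [set T | bounded_linear T /\
    forall eps : R, 0 < eps -> exists2 delta : R, 0 < delta &
      forall x : X, `|x - xb| < delta ->
        forall y k, G x y -> K k ->
          exists y', exists k', exists d : Y,
            [/\ G xb y', K k', `|d| <= 1 &
              y + k = y' + k' + T (x - xb) + (eps * `|x - xb|) *: d]].

Definition sv_of (X Y : Type) (g : X -> Y) : X -> set Y := fun x => [set g x].

Definition frechet_subdiff (X : normedModType R) (phi : X -> R) (xb : X)
    : set (X -> R) :=
  [set xs | dual_elt xs /\
    forall eps : R, 0 < eps -> exists2 delta : R, 0 < delta &
      forall x : X, `|x - xb| < delta ->
        phi x - phi xb - xs (x - xb) >= - (eps * `|x - xb|)].

Definition sv_sub (X Y : normedModType R) (F : X -> set Y) (f : X -> Y)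
    : X -> set Y := fun x => [set y - f x | y in F x].

End Defs.

From HB Require Import structures.
From mathcomp Require Import all_boot all_order all_algebra.
From mathcomp Require Import all_classical all_reals all_analysis.
From mathcomp Require Import ring lra.
Set Implicit Arguments. Unset Strict Implicit. Unset Printing Implicit Defensive.
Import Order.TTheory GRing.Theory Num.Theory.
Import numFieldNormedType.Exports.
Local Open Scope classical_set_scope.
Local Open Scope ring_scope.

(* Applying y^* in K_e^+ to the inclusion that defines t in the subdifferential
   of f = phi(.)e shows that x |-> y^*(t x) / y^*(e) is a Frechet subgradient
   of phi.  Conversely, if x^* is any Frechet subgradient of phi and T lies in
   the subdifferential of F - f, then T + x^*(.)e lies in that of F: the
   increment f(x) - f(xb) = (x^*(x - xb) + r) e with r >= -o(|x - xb|) splits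
   into a nonnegative multiple of e, which is absorbed into the cone, and a
   multiple of e of size o(|x - xb|).  Take S = T + y^*(e)^-1 (y^* o t) e. *)

Section Cone.
Variables (R : realType) (Y : normedModType R) (K : set Y).
Hypothesis coneK : pointed_closed_convex_cone K.

Lemma cone_scale (l : R) (u : Y) : 0 <= l -> K u -> K (l *: u).
Proof. by case: coneK => _ [+ _]; apply. Qed.

Lemma cone_add (u v : Y) : K u -> K v -> K (u + v).
Proof.
case: coneK => _ [_ [Kconv _]] Ku Kv.
have half : 0 <= (2^-1 : R) <= 1 by apply/andP; split; lra.
have := @cone_scale 2 _ _ (Kconv _ _ _ half Ku Kv).
have -> : (1 - 2^-1 : R) = 2^-1 by field.
by rewrite scalerDr !scalerA mulfV ?pnatr_eq0 // !scale1r; apply; lra.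
Qed.

End Cone.

Section DualElt.
Variables (R : realType) (X : normedModType R) (xs : X -> R).
Hypothesis xs_dual : dual_elt xs.

Lemma dual_elt0 : xs 0 = 0.
Proof. by have := xs_dual.1 1 0 0; rewrite scale1r addr0 mul1r; lra. Qed.

Lemma dual_eltZ (a : R) (u : X) : xs (a *: u) = a * xs u.
Proof. by have := xs_dual.1 a u 0; rewrite !addr0 dual_elt0 addr0. Qed.

Lemma dual_eltD (u v : X) : xs (u + v) = xs u + xs v.
Proof. by have := xs_dual.1 1 u v; rewrite scale1r mul1r. Qed.

Lemma dual_elt_bound_gt0 : exists2 c : R, 0 < c & forall u, `|xs u| <= c * `|u|.
Proof.
case: xs_dual => _ [M HM]; exists (`|M| + 1) => [|u]; first by rewrite ltr_pwDr.
apply: le_trans (HM u) _; apply: ler_wpM2r => //.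
by rewrite (le_trans (real_ler_norm _)) ?num_real // lerDl.
Qed.

Lemma dual_elt_scale (a : R) : dual_elt (fun u => a * xs u).
Proof.
case: xs_dual => xs_lin [M HM]; split=> [b u v|].
  by rewrite xs_lin mulrDr mulrCA.
exists (`|a| * M) => u; rewrite normrM -mulrA ler_wpM2l //.
Qed.

End DualElt.

Section BoundedLinear.
Variables (R : realType) (X Y : normedModType R).

Lemma bounded_linearD (T U : X -> Y) :
  bounded_linear T -> bounded_linear U -> bounded_linear (fun x => T x + U x).
Proof.
move=> [Tlin [MT HMT]] [Ulin [MU HMU]]; split=> [a u v|].
  by rewrite Tlin Ulin scalerDr !addrA (addrAC _ (T v)).
by exists (MT + MU) => u; rewrite mulrDl (le_trans (ler_normD _ _)) // lerD ?HMT ?HMU.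
Qed.

Lemma bounded_linear_rank_one (xs : X -> R) (e : Y) :
  dual_elt xs -> bounded_linear (fun x => xs x *: e).
Proof.
move=> [xs_lin [M HM]]; split=> [a u v|].
  by rewrite xs_lin scalerDl scalerA.
exists (M * `|e|) => u; rewrite normrZ mulrAC ler_wpM2r //.
Qed.

Lemma dual_elt_comp (ys : Y -> R) (t : X -> Y) :
  dual_elt ys -> bounded_linear t -> dual_elt (fun x => ys (t x)).
Proof.
move=> ys_dual [tlin [Mt HMt]]; split=> [a u v|].
  by rewrite tlin (dual_eltD ys_dual) (dual_eltZ ys_dual).
have [c c0 Hc] := dual_elt_bound_gt0 ys_dual.
by exists (c * Mt) => u; rewrite (le_trans (Hc _)) // -mulrA ler_wpM2l ?HMt ?(ltW c0).
Qed.

End BoundedLinear.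

Lemma decomp_ge_opp (R : realFieldType) (a r : R) :
  0 <= a -> - a <= r -> exists p m, [/\ 0 <= p, `|m| <= a & r = p + m].
Proof.
move=> a0 ra; exists (r - Num.min r 0), (Num.min r 0); split.
- by rewrite subr_ge0 ge_min lexx.
- by case: (leP 0 r) => r0; rewrite ?normr0 // ltr0_norm //; lra.
- by rewrite subrK.
Qed.

Lemma normr_le_scale_ball (R : realType) (Y : normedModType R) (a : R) (w : Y) :
  0 <= a -> `|w| <= a -> exists2 d : Y, `|d| <= 1 & w = a *: d.
Proof.
move=> a0 wa; have [a_eq0|a_neq0] := eqVneq a 0.
  by move: wa; rewrite a_eq0 normr_le0 => /eqP->; exists 0; rewrite ?normr0 ?scaler0.
exists (a^-1 *: w); last by rewrite scalerA mulfV ?scale1r.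
by rewrite normrZ ger0_norm ?invr_ge0 // ler_pdivrMl ?mulr1 // lt_def a_neq0.
Qed.

Lemma addr_rearrange (V : zmodType) (y k fx fxb y0 k' Tz D P Q M : V) :
  y - fx + k = y0 - fxb + k' + Tz + D -> fx - fxb = P + Q + M ->
  y + k = y0 + (k' + P) + (Tz + Q) + (D + M).
Proof.
move=> h1 h2.
have -> : y + k = (y - fx + k) + fx by rewrite addrAC subrK.
rewrite h1 -(subrK fxb fx) h2 !addrA -!(addrAC _ fxb) addrK.
by rewrite (addrAC _ D P) (addrAC _ Tz P) (addrAC _ D Q).
Qed.

Section Subdifferentials.
Variables (R : realType) (X Y : normedModType R) (K : set Y) (e : Y).
Hypotheses (coneK : pointed_closed_convex_cone K) (Ke : K e).

Lemma frechet_subdiff_scalarize (phi : X -> R) (xb : X) (t : X -> Y) (ys : Y -> R) :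
  frechet_subdiff_sv K (sv_of (fun x => phi x *: e)) xb t -> Keplus K e ys ->
  frechet_subdiff phi xb (fun x => (ys e)^-1 * ys (t x)).
Proof.
move=> [t_bl Ht] [[ys_dual ys_ge0] yse_neq0].
split; first exact/dual_elt_scale/dual_elt_comp.
have yse : 0 < ys e by rewrite lt_def yse_neq0 ys_ge0.
have [c c0 Hc] := dual_elt_bound_gt0 ys_dual.
move=> eps eps0; have eps'0 : 0 < eps * ys e / c by rewrite !divr_gt0 ?mulr_gt0.
have [delta delta0 Hdelta] := Ht _ eps'0; exists delta => // x hx.
have [_ [k [d [-> Kk d_le1 heq]]]] := Hdelta x hx _ 0 erefl coneK.1.
set n := `|x - xb| in heq *.
have {heq} := congr1 ys heq.
rewrite addr0 !(dual_eltD ys_dual) !(dual_eltZ ys_dual) => heq.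
have ysd : - c <= ys d.
  have := Hc d; rewrite ler_norml => /andP[+ _]; apply: le_trans.
  by rewrite lerN2 ler_piMr // ltW.
have hk := ys_ge0 _ Kk.
have scale_eps : eps * ys e / c * n * c = eps * n * ys e.
  by field; rewrite gt_eqF.
rewrite -(ler_pM2r yse) mulrBl (mulrAC _ (ys (t _))) mulVf // mul1r.
have n0 : 0 <= eps * ys e / c * n by apply: mulr_ge0; [exact: ltW | exact: normr_ge0].
nra.
Qed.

Lemma frechet_subdiff_sv_sub_rank_one (F : X -> set Y) (phi : X -> R) (xb : X)
    (T : X -> Y) (xs : X -> R) :
  frechet_subdiff_sv K (sv_sub F (fun x => phi x *: e)) xb T ->
  frechet_subdiff phi xb xs ->
  frechet_subdiff_sv K F xb (fun x => T x + xs x *: e).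
Proof.
move=> [T_bl HT] [xs_dual Hxs].
split; first exact/bounded_linearD/bounded_linear_rank_one.
move=> eps eps0; have eps2 : 0 < eps / 2 by lra.
(* [|e| + 1] rather than [|e|] keeps this tolerance positive when [e = 0]. *)
have e1 : 0 < `|e| + 1 by rewrite ltr_pwDr.
have eps'0 : 0 < eps / 2 / (`|e| + 1) by rewrite !divr_gt0.
have eps'e : eps / 2 / (`|e| + 1) * `|e| <= eps / 2.
  by rewrite mulrAC ler_pdivrMr // ler_wpM2l ?lerDl // ltW.
have [dT dT0 HdT] := HT _ eps2; have [dxs dxs0 Hdxs] := Hxs _ eps'0.
exists (Num.min dT dxs) => [|x]; first by rewrite lt_min dT0 dxs0.
rewrite lt_min => /andP[xT xxs] y k Fy Kk.
set n := `|x - xb| in xT xxs *; have n0 : 0 <= n := normr_ge0 _.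
have [p [m [p0 mn phiE]]] := decomp_ge_opp (mulr_ge0 (ltW eps'0) n0) (Hdxs x xxs).
have [_ [k' [d [[y0 Fy0 <-] Kk' d1 heqT]]]] :=
  HdT x xT (y - phi x *: e) k (ex_intro2 _ _ y Fy erefl) Kk.
have half_n : 0 <= eps / 2 * n by rewrite mulr_ge0 // ltW.
have [d' d'1 dd'] : exists2 d' : Y, `|d'| <= 1 &
    (eps / 2 * n) *: d + m *: e = (eps * n) *: d'.
  apply: normr_le_scale_ball; first by rewrite mulr_ge0 // ltW.
  rewrite (le_trans (ler_normD _ _)) // normrZ (ger0_norm half_n) normrZ.
  have : `|m| * `|e| <= eps / 2 * n.
    apply: le_trans (ler_wpM2r (normr_ge0 e) mn) _.
    by rewrite mulrAC ler_wpM2r.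
  have : eps / 2 * n * `|d| <= eps / 2 * n by rewrite ler_piMr.
  lra.
exists y0, (k' + p *: e), d'; split => //.
  by apply: (cone_add coneK Kk'); apply: (cone_scale coneK p0).
rewrite -dd'; apply: addr_rearrange heqT _.
rewrite -scalerBl -!scalerDl; congr (_ *: _); lra.
Qed.

End Subdifferentials.

Theorem mainTheorem13 (R : realType) (X Y : normedModType R) (K : set Y)
  (F : X -> set Y) (phi : X -> R) (xb : X) (e : Y) :
  pointed_closed_convex_cone K ->
  (forall x, exists y, F x y) ->
  K e -> e != 0 ->
  frechet_subdiff phi xb !=set0 ->
  let f := fun x : X => phi x *: e in
  forall T : X -> Y, frechet_subdiff_sv K (sv_sub F f) xb T ->
  forall t : X -> Y, frechet_subdiff_sv K (sv_of f) xb t ->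
  forall ys : Y -> R, Keplus K e ys ->
  exists2 S : X -> Y, frechet_subdiff_sv K F xb S &
    T = (fun x => S x - ((ys e)^-1 * ys (t x)) *: e).
Proof.
move=> coneK _ Ke _ _ f T HT t Ht ys ys_Ke.
have xs_phi := frechet_subdiff_scalarize coneK Ke Ht ys_Ke.
exists (fun x => T x + ((ys e)^-1 * ys (t x)) *: e).
  exact: (frechet_subdiff_sv_sub_rank_one coneK Ke HT xs_phi).
by apply: funext => x; rewrite addrK.
Qed.
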